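(* Let $\mu$ be a probability measure on a finitely generated group $\Gamma$ inducing an irreducible and aperiodic random walk $p(x,y)=\mu(x^{-1}y)$ with spectral radius $\rho$, which satisfies a ratio limit theorem with kernel $h$ such that $Ph=hP=\rho\,h$ (matrix products). Let $R_\mu=\{y\in\Gamma: H(x,y)=H(x,e)\text{ for all }x\in\Gamma\}$. Suppose that $R_\mu$ is infinite, and let $\xi$ be its unique accumulation point in the ratio limit boundary. If $x\mapsto H(x,\xi)$ is a minimal $\rho$-harmonic function, then $g\xi=\xi$ for every $g\in\Gamma$.
   Context: Ratio limit theorem: $h(x,y)=\lim_n p^{(n)}(x,y)/p^{(n)}(e,e)\in(0,\infty)$ exists for all $x,y\in\Gamma$ ($e$ the identity); ratio limit kernel $H(x,y)=h(x,y)/h(e,y)$; by group invariance $h(gx,gy)=h(x,y)$. The ratio limit compactification is the unique (up to homeomorphism fixing $\Gamma$) compact Hausdorff space containing $\Gamma$ as discrete open dense subset to which each $H(x,\cdot)$ extends continuously (extension also denoted $H$) and whose boundary points are separated by these extensions; the left action of $\Gamma$ on itself extends to a continuous action on it. $R_\mu$ is a subgroup; if infinite, it has a unique accumulation point $\xi$ in the boundary with $H(x,y)=H(x,\xi)$ for $y\in R_\mu$. A function $f:\Gamma\to\mathbb R$ is $\rho$-harmonic if $\sum_w p(x,w)f(w)=\rho f(x)$ for all $x$; a positive $\rho$-harmonic $f$ is minimal if $f(e)=1$ and $f$ is not a convex combination of two distinct positive $\rho$-harmonic functions with value $1$ at $e$. *)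

From HB Require Import structures.
From mathcomp Require Import all_boot all_order all_algebra.
From mathcomp Require Import all_classical all_reals all_analysis.
Set Implicit Arguments. Unset Strict Implicit. Unset Printing Implicit Defensive.
Import Order.TTheory GRing.Theory Num.Theory numFieldNormedType.Exports.
Local Open Scope classical_set_scope.
Local Open Scope ring_scope.

Record group_law (G : Type) := GroupLaw {
  gmul : G -> G -> G;
  ginv : G -> G;
  gone : G;
  gmulA : forall x y z, gmul x (gmul y z) = gmul (gmul x y) z;
  gmul1 : forall x, gmul gone x = x;
  gmulV : forall x, gmul (ginv x) x = gone }.

Inductive generated (G : eqType) (L : group_law G) (S : seq G) : G -> Prop :=
  | gen_one : generated L S (gone L)
  | gen_mul s x : s \in S -> generated L S x -> generated L S (gmul L s x)
  | gen_mulinv s x : s \in S -> generated L S x ->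
                     generated L S (gmul L (ginv L s) x).

Definition finitely_generated (G : eqType) (L : group_law G) :=
  exists S : seq G, forall x, generated L S x.

Section RW.
Context {R : realType} {G : choiceType} (L : group_law G) (mu : G -> R).

Definition ptrans (x y : G) : R := mu (gmul L (ginv L x) y).

Fixpoint pn (n : nat) (x y : G) : R :=
  match n with
  | 0 => if `[< x = y >] then 1 else 0
  | n.+1 => fine (\esum_(w in [set: G]) ((pn n x w) * ptrans w y)%:E)%E
  end.

Definition is_prob_measure :=
  (forall x, 0 <= mu x) /\ (\esum_(x in [set: G]) (mu x)%:E = 1%E).

Definition irreducible_rw := forall x y, exists n, 0 < pn n x y.

(* period of the identity (= of every state) is 1 *)
Definition aperiodic_rw :=
  forall d : nat, (forall n, 0 < pn n (gone L) (gone L) -> (d %| n)%N) -> d = 1%N.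

Definition spectral_radius : R :=
  limn_sup (fun n => pn n (gone L) (gone L) `^ (n%:R^-1)).

Definition ratio_limit_kernel (h : G -> G -> R) :=
  forall x y, 0 < h x y /\
    (fun n => pn n x y / pn n (gone L) (gone L)) @ \oo --> h x y.

Definition Ph_hP_eigen (rho : R) (h : G -> G -> R) :=
  (forall x y, \esum_(w in [set: G]) (ptrans x w * h w y)%:E = (rho * h x y)%:E)%E /\
  (forall x y, \esum_(w in [set: G]) (h x w * ptrans w y)%:E = (rho * h x y)%:E)%E.

Definition Hker (h : G -> G -> R) (x y : G) : R := h x y / h (gone L) y.

Definition Rmu (h : G -> G -> R) : set G :=
  [set y | forall x, Hker h x y = Hker h x (gone L)].

Definition pos_harmonic (rho : R) (f : G -> R) :=
  (forall x, 0 < f x) /\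
  (forall x, \esum_(w in [set: G]) (ptrans x w * f w)%:E = (rho * f x)%:E)%E.

Definition minimal_harmonic (rho : R) (f : G -> R) :=
  pos_harmonic rho f /\ f (gone L) = 1 /\
  ~ (exists f1 f2 (t : R), pos_harmonic rho f1 /\ pos_harmonic rho f2 /\
       f1 (gone L) = 1 /\ f2 (gone L) = 1 /\ f1 <> f2 /\ 0 < t < 1 /\
       f = (fun x => t * f1 x + (1 - t) * f2 x)).

(* (X, iota, Hext, act) is a (hence "the") ratio limit compactification:
   compact Hausdorff, iota embeds G as a discrete open dense subset,
   each H(x,.) extends continuously to Hext x, boundary points are separated
   by the extensions, and the left action extends continuously. *)
Definition ratio_limit_compactification (h : G -> G -> R) (X : topologicalType)
  (iota : G -> X) (Hext : G -> X -> R) (act : G -> X -> X) :=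
  compact [set: X] /\ hausdorff_space X /\ injective iota /\
  (forall y, open [set iota y]) /\ closure (range iota) = [set: X] /\
  (forall x, continuous (Hext x) /\ forall y, Hext x (iota y) = Hker h x y) /\
  (forall xi eta, ~ range iota xi -> ~ range iota eta ->
     (forall x, Hext x xi = Hext x eta) -> xi = eta) /\
  (forall g, continuous (act g) /\ forall y, act g (iota y) = iota (gmul L g y)).

End RW.

From HB Require Import structures.
From mathcomp Require Import all_boot all_order all_algebra.
From mathcomp Require Import all_classical all_reals all_analysis.
From mathcomp Require Import ring lra.
Import Order.TTheory GRing.Theory Num.Theory numFieldNormedType.Exports.
Local Open Scope classical_set_scope.
Local Open Scope ring_scope.

(* Write f(x) = H(x,e).  Since H(x,y) = f(x) on R_mu and H(x,.) is continuous,
   H(x,xi) = f(x).  The equation hP = rho h, rewritten with the invariance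
   h(gx,gy) = h(x,y), says sum_s mu(s) f(s x) = rho f(x) ("left harmonicity").
   Hence for mu(s) > 0 the normalised translate f(s .)/f(s) is a positive
   harmonic function dominated by a multiple of f; by minimality it equals f,
   i.e. f(s x) = f(s) f(x).  The set of such s is closed under products, so by
   irreducibility f is multiplicative on all of Gamma.  Multiplicativity gives
   H(x, g y) = f(x) for y in R_mu, hence H(x, g xi) = f(x) = H(x, xi) by
   continuity.  Finally g xi is again a boundary point, and boundary points
   are separated by the functions H(x,.), so g xi = xi. *)

Section GroupLaw.
Context {G : Type} (L : group_law G).
Local Notation m := (gmul L).
Local Notation inv := (ginv L).
Local Notation e := (gone L).

Lemma gmulKg a b : m (inv a) (m a b) = b.
Proof. by rewrite gmulA gmulV gmul1. Qed.

Lemma gmulgV x : m x (inv x) = e.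
Proof.
have E : m (inv (inv x)) (m (inv x) (m x (inv x))) = m x (inv x).
  by rewrite gmulKg.
by rewrite -[LHS]E (gmulKg x (inv x)) gmulV.
Qed.

Lemma gmulg1 x : m x e = x.
Proof. by rewrite -(gmulV L x) gmulA gmulgV gmul1. Qed.

Lemma gmulVKg a b : m a (m (inv a) b) = b.
Proof. by rewrite gmulA gmulgV gmul1. Qed.

Lemma ginvK x : inv (inv x) = x.
Proof. by rewrite -[LHS]gmulg1 -(gmulV L x) gmulKg. Qed.

Lemma gmulI a : injective (m a).
Proof. by move=> b c E; rewrite -(gmulKg a b) E gmulKg. Qed.

Lemma ginvM_translate g x y : m (inv (m g x)) (m g y) = m (inv x) y.
Proof.
have -> : m g y = m (m g x) (m (inv x) y) by rewrite -gmulA gmulVKg.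
by rewrite gmulKg.
Qed.
End GroupLaw.

Section NonnegSums.
Context {R : realType} {T : choiceType}.
Local Open Scope ereal_scope.

Lemma ge0_esumZl (a : T -> \bar R) (r : R) : (0 < r)%R ->
  (forall i, 0 <= a i) ->
  \esum_(i in [set: T]) (r%:E * a i) = r%:E * \esum_(i in [set: T]) a i.
Proof.
move=> r0 a0; rewrite /esum -ereal_sup_pZl // image_comp.
congr ereal_sup; apply: eq_imagel => A [finA _] /=.
by rewrite !fsbig_finite // ge0_sume_distrr.
Qed.

Lemma esum_ge_term (a : T -> \bar R) j : (forall i, 0 <= a i) ->
  a j <= \esum_(i in [set: T]) a i.
Proof.
move=> a0; apply: esum_ge; exists [set j]; last by rewrite fsbig_set1.
by split; [exact: finite_set1|].
Qed.

Lemma esum_reindex_bij {f g : T -> T} {a : T -> \bar R} :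
  cancel f g -> cancel g f ->
  \esum_(i in [set: T]) a i = \esum_(i in [set: T]) a (f i).
Proof.
move=> fK gK; apply: reindex_esum; split.
- by move=> x.
- by move=> x y _ _ /(congr1 g); rewrite !fK.
- by move=> y _; exists (g y) => //; rewrite gK.
Qed.
End NonnegSums.

Section RandomWalk.
Context {R : realType} {G : choiceType} (L : group_law G) (mu : G -> R).
Local Notation m := (gmul L).
Local Notation inv := (ginv L).
Local Notation e := (gone L).
Local Notation p := (ptrans L mu).

(* f is rho-harmonic for the walk moving by left multiplication x |-> s x
   (ordinary harmonicity is with respect to right moves x |-> x s) *)
Definition left_harmonic (rho : R) (f : G -> R) :=
  forall x, (\esum_(s in [set: G]) (mu s * f (m s x))%:E = (rho * f x)%:E)%E.

Lemma ptrans_translate g x y : p (m g x) (m g y) = p x y.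
Proof. by rewrite /ptrans ginvM_translate. Qed.

Lemma pn_translate n g x y : pn L mu n (m g x) (m g y) = pn L mu n x y.
Proof.
elim: n x y => [|n IH] x y /=.
  case: (asboolP (m g x = m g y)) => [/(gmulI L) ->|ne]; first by case: asboolP.
  by case: asboolP => // xy; case: ne; rewrite xy.
congr fine.
rewrite (esum_reindex_bij (gmulKg L g) (gmulVKg L g)).
by apply: eq_esum => w _; rewrite IH ptrans_translate.
Qed.

Hypothesis mu_ge0 : forall x, 0 <= mu x.

Lemma ptrans_ge0 x y : 0 <= p x y.
Proof. exact: mu_ge0. Qed.

Lemma pn_ge0 n x y : 0 <= pn L mu n x y.
Proof.
elim: n x y => [|n IH] x y /=; first by case: asboolP.
apply/fine_ge0/esum_ge0 => w _.
by rewrite lee_fin mulr_ge0 ?ptrans_ge0.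
Qed.

Lemma pnS_gt0 n x y : 0 < pn L mu n.+1 x y ->
  exists w, 0 < pn L mu n x w /\ 0 < p w y.
Proof.
move=> pos; apply: contrapT => none; move: pos => /=.
suff -> : (\esum_(w in [set: G]) (pn L mu n x w * p w y)%:E = 0)%E.
  by rewrite ltxx.
apply: esum1 => w _; congr (_%:E).
have [->|xw] := eqVneq (pn L mu n x w) 0; first by rewrite mul0r.
have [->|wy] := eqVneq (p w y) 0; first by rewrite mulr0.
by exfalso; apply: none; exists w; rewrite !lt0r xw wy pn_ge0 ptrans_ge0.
Qed.

Lemma reachable_closed (S : set G) :
  (forall y s, S y -> 0 < mu s -> S (m y s)) ->
  forall n x y, S x -> 0 < pn L mu n x y -> S y.
Proof.
move=> stable; elim=> [|n IH] x y Sx /=.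
  by case: asboolP => [<- //|_]; rewrite ltxx.
move=> /pnS_gt0 [w [xw wy]].
by rewrite -(gmulVKg L w y); apply: stable wy; apply: IH xw.
Qed.

Lemma translate_harmonic rho f g : pos_harmonic L mu rho f ->
  pos_harmonic L mu rho (fun x => f (m g x) / f g).
Proof.
move=> [fpos fh]; split=> [x|x]; first by rewrite divr_gt0.
have fg0 : f g != 0 by rewrite gt_eqF.
transitivity (\esum_(w in [set: G])
                 (((f g)^-1)%:E * (p (m g x) w * f w)%:E))%E.
  rewrite [RHS](esum_reindex_bij (gmulKg L g) (gmulVKg L g)).
  apply: eq_esum => w _; rewrite -EFinM ptrans_translate.
  by congr (_%:E); field.
rewrite ge0_esumZl ?invr_gt0 //; last first.
  by move=> w; rewrite lee_fin mulr_ge0 ?ptrans_ge0 ?ltW.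
by rewrite fh -EFinM; congr (_%:E); field.
Qed.

Lemma harmonic_residual rho f f0 t : 0 < t < 1 ->
  pos_harmonic L mu rho f -> pos_harmonic L mu rho f0 ->
  (forall x, t * f0 x < f x) ->
  pos_harmonic L mu rho (fun x => (f x - t * f0 x) / (1 - t)).
Proof.
move=> /andP[t0 t1] [fpos fh] [f0pos f0h] tf0f.
have t1' : 0 < 1 - t by rewrite subr_gt0.
set F := fun x => _.
have Fpos x : 0 < F x by rewrite divr_gt0 ?subr_gt0.
split=> // x.
have split_term w : (p x w * f w)%:E =
    ((1 - t)%:E * (p x w * F w)%:E + t%:E * (p x w * f0 w)%:E)%E.
  by rewrite -!EFinM -EFinD /F; congr (_%:E); field; rewrite gt_eqF.
have pF w : (0 <= (p x w * F w)%:E)%E.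
  by rewrite lee_fin mulr_ge0 ?ptrans_ge0 ?ltW.
have pf0 w : (0 <= (p x w * f0 w)%:E)%E.
  by rewrite lee_fin mulr_ge0 ?ptrans_ge0 ?ltW.
have := fh x; rewrite (eq_esum (fun w _ => split_term w)) esumD => [|w _|w _];
  last 2 first.
- by apply: mule_ge0; rewrite // lee_fin ltW.
- by apply: mule_ge0; rewrite // lee_fin ltW.
rewrite !ge0_esumZl // f0h.
have : (0 <= \esum_(w in [set: G]) (p x w * F w)%:E)%E by exact: esum_ge0.
case: (\esum_(w in [set: G]) (p x w * F w)%:E)%E => [s _| _ |//].
- rewrite -!EFinM -EFinD => -[sE]; congr (_%:E).
  apply: (mulfI (lt0r_neq0 t1')).
  have -> : (1 - t) * (rho * F x) = rho * f x - t * (rho * f0 x).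
    by rewrite /F; field; rewrite gt_eqF.
  by rewrite -sE; ring.
- (* an infinite residual sum would make the sum for f infinite *)
  by rewrite gt0_muley ?lte_fin.
Qed.

Lemma minimal_dominated rho f f0 c : minimal_harmonic L mu rho f ->
  pos_harmonic L mu rho f0 -> f0 e = 1 -> 0 < c ->
  (forall x, c * f0 x <= f x) -> f0 = f.
Proof.
move=> [fh [fe fmin]] f0h f0e c0 cf0f.
have [fpos _] := fh; have [f0pos _] := f0h.
have c1 : c <= 1 by have := cf0f e; rewrite f0e fe mulr1.
pose t := c / 2.
have t0 : 0 < t by rewrite divr_gt0.
have t1 : t < 1 by rewrite ltr_pdivrMr //; lra.
have tf0f x : t * f0 x < f x.
  apply: lt_le_trans (cf0f x); rewrite ltr_pM2r //.
  by rewrite ltr_pdivrMr //; lra.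
pose F x := (f x - t * f0 x) / (1 - t).
have Fh : pos_harmonic L mu rho F by apply: harmonic_residual; rewrite ?t0.
have Fe : F e = 1 by rewrite /F f0e fe mulr1 divff // gt_eqF // subr_gt0.
have fE : f = (fun x => t * f0 x + (1 - t) * F x).
  by apply: funext => x; rewrite /F; field; rewrite gt_eqF // subr_gt0.
have f0F : f0 = F.
  apply: contrapT => f0F; apply: fmin.
  by exists f0, F, t; rewrite t0 t1.
by rewrite fE -f0F; apply: funext => x; ring.
Qed.

Lemma left_harmonic_term_le rho f s x : (forall y, 0 < f y) ->
  left_harmonic rho f -> mu s * f (m s x) <= rho * f x.
Proof.
move=> fpos fh; rewrite -lee_fin -fh.
by apply: (esum_ge_term (fun w => (mu w * f (m w x))%:E)) => w;
  rewrite lee_fin mulr_ge0 ?mu_ge0 ?ltW.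
Qed.

Lemma left_harmonic_rho_gt0 rho f : is_prob_measure mu ->
  (forall y, 0 < f y) -> left_harmonic rho f -> 0 < rho.
Proof.
move=> [_ mu1] fpos fh.
have [s s0] : exists s, 0 < mu s.
  apply: contrapT => nos; move: mu1.
  rewrite esum1 => [[] /eqP|x _]; first by rewrite eq_sym oner_eq0.
  congr (_%:E); apply/eqP; rewrite eq_le mu_ge0 andbT leNgt.
  by apply/negP => sx; apply: nos; exists x.
have := left_harmonic_term_le rho f s e fpos fh.
by move=> /(lt_le_trans (mulr_gt0 s0 (fpos _))); rewrite pmulr_lgt0.
Qed.

Lemma minimal_multiplicative rho f s : minimal_harmonic L mu rho f ->
  left_harmonic rho f -> 0 < rho -> 0 < mu s ->
  forall x, f (m s x) = f s * f x.
Proof.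
move=> fmin fl rho0 s0; have [[fpos fh] [fe _]] := fmin.
pose f0 x := f (m s x) / f s.
have f0e : f0 e = 1 by rewrite /f0 gmulg1 divff // gt_eqF.
have c0 : 0 < mu s * f s / rho by rewrite !divr_gt0 ?mulr_gt0.
have dom x : mu s * f s / rho * f0 x <= f x.
  have -> : mu s * f s / rho * f0 x = mu s * f (m s x) / rho.
    by rewrite /f0; field; rewrite !gt_eqF.
  by rewrite ler_pdivrMr // [f x * _]mulrC left_harmonic_term_le.
have f0h := translate_harmonic rho f s (conj fpos fh).
have := minimal_dominated rho f f0 _ fmin f0h f0e c0 dom.
move=> f0f x; have := congr1 (fun k => k x) f0f.
by rewrite /f0 => <-; field; rewrite gt_eqF.
Qed.

Lemma minimal_left_harmonic_mult rho f : irreducible_rw L mu ->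
  minimal_harmonic L mu rho f -> left_harmonic rho f -> 0 < rho ->
  forall y x, f (m y x) = f y * f x.
Proof.
move=> irr fmin fl rho0 y.
pose S y := forall x, f (m y x) = f y * f x.
have Se : S e by have [_ [fe _]] := fmin; move=> x; rewrite gmul1 fe mul1r.
have stable a b : S a -> 0 < mu b -> S (m a b).
  move=> Sa b0 x.
  by rewrite -gmulA !Sa (minimal_multiplicative rho f b fmin fl rho0 b0) mulrA.
by have [n ey] := irr e y; apply: (reachable_closed S stable n e y Se ey).
Qed.
End RandomWalk.

Section RatioLimitKernel.
Context {R : realType} {G : choiceType} (L : group_law G) (mu : G -> R).
Context (h : G -> G -> R) (ratio : ratio_limit_kernel L mu h).
Hypothesis mu_ge0 : forall x, 0 <= mu x.
Local Notation m := (gmul L).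
Local Notation inv := (ginv L).
Local Notation e := (gone L).
Local Notation f := (fun x => Hker L h x e).

Lemma h_gt0 x y : 0 < h x y.
Proof. exact: (ratio x y).1. Qed.

(* group invariance of h, inherited from that of the n-step probabilities *)
Lemma h_translate g x y : h (m g x) (m g y) = h x y.
Proof.
have [_ gxy] := ratio (m g x) (m g y); have [_ xy] := ratio x y.
have pnE : (fun n => pn L mu n (m g x) (m g y) / pn L mu n e e) =
           (fun n => pn L mu n x y / pn L mu n e e).
  by apply: funext => n; rewrite pn_translate.
rewrite pnE in gxy.
exact: cvg_unique gxy xy.
Qed.

Lemma Hker_e_gt0 x : 0 < f x.
Proof. by rewrite divr_gt0 ?h_gt0. Qed.

Lemma hP_left_harmonic rho :
  (forall x y, \esum_(w in [set: G]) (h x w * ptrans L mu w y)%:E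
                 = (rho * h x y)%:E)%E ->
  left_harmonic L mu rho f.
Proof.
move=> hP x; have hee : h e e != 0 by rewrite gt_eqF ?h_gt0.
rewrite (_ : (rho * _)%:E = ((h e e)^-1%:E * (rho * h x e)%:E)%E); last first.
  by rewrite -EFinM /Hker; congr (_%:E); field.
rewrite -hP -ge0_esumZl; last 2 first.
- by rewrite invr_gt0 h_gt0.
- by move=> w; rewrite lee_fin mulr_ge0 ?(ptrans_ge0 L mu mu_ge0) ?ltW ?h_gt0.
rewrite [RHS](esum_reindex_bij (ginvK L) (ginvK L)).
apply: eq_esum => s _; rewrite -EFinM /ptrans ginvK gmulg1.
have -> : h x (inv s) = h (m s x) e by rewrite -(h_translate s x) (gmulgV L).
by congr (_%:E); rewrite /Hker; field.
Qed.

Lemma Hker_translate_Rmu g x y : (forall a b, f (m a b) = f a * f b) ->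
  Rmu L h y -> Hker L h x (m g y) = f x.
Proof.
move=> fmul Ry.
have hRmu z : h z y = f z * h e y.
  by rewrite -Ry /Hker; field; rewrite gt_eqF // h_gt0.
have hx : h x (m g y) = h (m (inv g) x) y.
  by have := h_translate g (m (inv g) x) y; rewrite (gmulVKg L).
have he : h e (m g y) = h (inv g) y.
  by have := h_translate g (inv g) y; rewrite (gmulgV L g).
rewrite {1}/Hker hx he (hRmu (m (inv g) x)) (hRmu (inv g)) fmul; field.
by rewrite !gt_eqF ?Hker_e_gt0 ?h_gt0.
Qed.
End RatioLimitKernel.

Lemma continuous_const_closure {X Y : topologicalType} {phi : X -> Y}
    {E : set X} {k : Y} {t : X} :
  hausdorff_space Y -> continuous phi -> (forall q, E q -> phi q = k) ->
  closure E t -> phi t = k.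
Proof.
move=> Yhaus phic Ek Et; apply: contrapT => phitk.
have notk : nbhs (phi t) (~` [set k]).
  apply: open_nbhs_nbhs; split => //.
  by rewrite openC; exact/accessible_closed_set1/hausdorff_accessible.
have [q [Eq nkq]] := Et _ (phic t _ notk).
by apply: nkq; rewrite /= Ek.
Qed.

Lemma translate_limit_point {X : topologicalType} {I : Type} {iota : I -> X}
    {a : X -> X} {s : I -> I} {E : set I} {xi : X} :
  hausdorff_space X -> (forall y, open [set iota y]) -> injective iota ->
  injective s -> continuous a -> (forall y, a (iota y) = iota (s y)) ->
  limit_point (iota @` E) xi -> ~ range iota (a xi).
Proof.
move=> Xhaus iopen iinj sinj acont aiota xlim [z _ az].
have U1 : nbhs xi (a @^-1` [set iota z]).
  by apply: acont; rewrite -az; apply: open_nbhs_nbhs.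
have [q [y1xi [y1 _ y1q] ay1]] := xlim _ U1; subst q.
have U2 : nbhs xi (a @^-1` [set iota z] `&` ~` [set iota y1]).
  apply: filterI U1 _; apply: open_nbhs_nbhs; split.
    by rewrite openC; exact/accessible_closed_set1/hausdorff_accessible.
  by move=> /= xiy1; move: y1xi; rewrite xiy1 eqxx.
have [q [_ [y2 _ y2q] [ay2 y21]]] := xlim _ U2; subst q.
apply: y21; congr iota; apply/sinj/iinj.
by rewrite -!aiota ay1 ay2.
Qed.

Theorem proposition6p3 (R : realType) (G : choiceType) (L : group_law G)
  (mu : G -> R) (h : G -> G -> R)
  (X : topologicalType) (iota : G -> X) (Hext : G -> X -> R) (act : G -> X -> X)
  (xi : X) :
  finitely_generated L ->
  is_prob_measure mu ->
  irreducible_rw L mu ->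
  aperiodic_rw L mu ->
  ratio_limit_kernel L mu h ->
  Ph_hP_eigen L mu (spectral_radius L mu) h ->
  ratio_limit_compactification L h iota Hext act ->
  infinite_set (Rmu L h) ->
  ~ range iota xi ->
  limit_point (iota @` Rmu L h) xi ->
  (forall eta, ~ range iota eta -> limit_point (iota @` Rmu L h) eta -> eta = xi) ->
  minimal_harmonic L mu (spectral_radius L mu) (fun x => Hext x xi) ->
  forall g, act g xi = xi.
Proof.
move=> _ prob irr _ ratio [_ hP] [_ [Xhaus [iinj [iopen [_ [Hcont [Hsep Hact]]]]]]].
move=> _ xi_bd xi_lim _ xi_min g.
set rho := spectral_radius L mu in hP xi_min.
set f := fun x => Hker L h x (gone L).
have mu_ge0 := prob.1.
have xi_cl : closure (iota @` Rmu L h) xi by exact: subset_limit_point.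
(* H(., xi) = H(., e), since H(x, .) is continuous and constant on R_mu *)
have Hxi x : Hext x xi = f x.
  apply: (continuous_const_closure (@Rhausdorff R) (Hcont x).1 _ xi_cl).
  by move=> _ [y Ry <-]; rewrite (Hcont x).2 Ry.
have f_min : minimal_harmonic L mu rho f by rewrite -(funext Hxi).
have f_left := hP_left_harmonic L mu h ratio mu_ge0 rho hP.
have rho_gt0 :=
  left_harmonic_rho_gt0 L mu mu_ge0 _ _ prob (Hker_e_gt0 L mu h ratio) f_left.
have f_mul :=
  minimal_left_harmonic_mult L mu mu_ge0 _ _ irr f_min f_left rho_gt0.
(* H(., g xi) = H(., e) as well, by continuity of the action *)
have Hgxi x : Hext x (act g xi) = f x.
  apply: (continuous_const_closure (phi := fun q => Hext x (act g q))
           (@Rhausdorff R) _ _ xi_cl).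
    by move=> q; apply: continuous_comp;
      [exact: (Hact g).1|exact: (Hcont x).1].
  move=> _ [y Ry <-]; rewrite /= (Hact g).2 (Hcont x).2.
  exact: Hker_translate_Rmu L mu h ratio g x y f_mul Ry.
have gxi_bd : ~ range iota (act g xi).
  exact: (translate_limit_point Xhaus iopen iinj (gmulI L g) (Hact g).1
           (Hact g).2 xi_lim).
by apply: Hsep => // x; rewrite Hgxi Hxi.
Qed.
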